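(* For every integer $m\geq 0$, $T(\Lambda_{m+1})\subseteq\Lambda_m$, i.e. $T(n)\in\Lambda_m$ for every $n\in\Lambda_{m+1}$.
   Context: $\mathbb{N}=\{1,2,3,\dots\}$, $\mathbb{N}_0=\mathbb{N}\cup\{0\}$. The Collatz map $T:\mathbb{N}\to\mathbb{N}$ is $T(n)=\frac{3n+1}{2}$ if $n$ is odd and $T(n)=\frac{n}{2}$ if $n$ is even. For $0\leq m\leq 3$ let $\Lambda_m=\{2^m\}$, and for $m\geq 4$ let $\Lambda_m$ be the set of all $n\in\mathbb{N}$ that can be written as $n=\frac{2^m}{3^l}-\sum_{k=1}^{l}\frac{2^{b_k}}{3^k}$ for some integers $l,b_1,\dots,b_l\in\mathbb{N}_0$ with $0\leq l\leq m-3$ and $0\leq b_1<b_2<\cdots<b_l\leq m-4$ (for $l=0$ the sum is empty). *)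

From mathcomp Require Import all_boot all_order all_algebra.
Set Implicit Arguments. Unset Strict Implicit. Unset Printing Implicit Defensive.
Import Order.TTheory GRing.Theory Num.Theory.

(* Collatz map on positive naturals: T n = (3n+1)/2 if n odd, n/2 if n even.
   For odd n, 3n+1 is even, so the nat division is exact. *)
Definition collatzT (n : nat) : nat :=
  if odd n then (3 * n + 1) %/ 2 else n %/ 2.

Local Open Scope ring_scope.

(* The rational value 2^m/3^l - sum_{k=1}^{l} 2^{b_k}/3^k, where the
   sequence b = [:: b_1; ...; b_l] (so b`_i = b_{i+1}) and l = size b. *)
Definition lambda_val (m : nat) (b : seq nat) : rat :=
  (2%:Q ^+ m) / (3%:Q ^+ size b)
  - \sum_(i < size b) (2%:Q ^+ (nth 0%N b i)) / (3%:Q ^+ i.+1).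

Definition inLambda (m : nat) (n : nat) : Prop :=
  if (m <= 3)%N then n = (2 ^ m)%N
  else (0 < n)%N /\
       exists b : seq nat,
         [/\ (size b <= m - 3)%N,
             sorted ltn b,
             all (fun x => x <= m - 4)%N b
           & n%:Q = lambda_val m b].

From mathcomp Require Import all_boot all_order all_algebra ring zify.
Set Implicit Arguments. Unset Strict Implicit. Unset Printing Implicit Defensive.
Import Order.TTheory GRing.Theory Num.Theory.

(** Clearing denominators, [3^l * n + sum_k 2^(b_k) 3^(l-k) = 2^m]; for [m > 0]
    the parity of [n] is therefore that of the number of exponents [b_k = 0],
    i.e. of [b_1 = 0] for a strictly increasing [b].  If [b_1 > 0] then
    [n/2] has exponents [b_k - 1]; if [b_1 = 0] then [3n+1] is the value of
    the tail of [b], which is even, and again halving decrements the exponents.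
    So [T] maps the value of [b] at [m+1] to the value at [m] of the
    decremented nonzero exponents, and this sequence meets the constraints of
    [Lambda_m]. *)

Local Open Scope ring_scope.

Lemma natQ (n : nat) : n%:Q = n%:R.
Proof. by rewrite -pmulrn. Qed.

Lemma lambda_val_nil m : lambda_val m [::] = (2 ^ m)%N%:R.
Proof. by rewrite /lambda_val big_ord0 expr0 divr1 subr0 natrX. Qed.

Lemma lambda_val_cons m x b :
  lambda_val m (x :: b) = (lambda_val m b - 2%:Q ^+ x) / 3%:Q.
Proof.
rewrite /lambda_val /= big_ord_recl /=.
rewrite (eq_bigr (fun i : 'I_ _ => 2%:Q ^+ nth 0%N b i / 3%:Q ^+ i.+1 / 3%:Q)).
  by rewrite -mulr_suml exprS; field; rewrite expf_neq0.
by move=> i _; rewrite [3%:Q ^+ _.+2]exprS; field; rewrite expf_neq0.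
Qed.

Lemma lambda_val_map_succ m b :
  lambda_val m.+1 [seq x.+1 | x <- b] = 2%:Q * lambda_val m b.
Proof.
elim: b => [|x b IHb]; first by rewrite !lambda_val_nil expnS natrM.
by rewrite /= !lambda_val_cons IHb exprS; field.
Qed.

Fixpoint lambda_sum (b : seq nat) : nat :=
  if b is x :: b' then 2 ^ x * 3 ^ size b' + lambda_sum b' else 0.

Lemma lambda_valE m b :
  3%:Q ^+ size b * lambda_val m b + (lambda_sum b)%:R = (2 ^ m)%N%:R.
Proof.
elim: b => [|x b IHb]; first by rewrite lambda_val_nil expr0 mul1r addr0.
by rewrite /= lambda_val_cons -IHb natrD natrM !natrX exprS; field.
Qed.

Lemma lambda_val_natE m b (n : nat) :
  n%:Q = lambda_val m b -> (n * 3 ^ size b + lambda_sum b = 2 ^ m)%N.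
Proof.
move=> hn; apply/eqP; rewrite -(eqr_nat rat) -(lambda_valE m b) -hn.
by rewrite natrD natrM natrX mulrC -pmulrn.
Qed.

Lemma odd_lambda_sum b : odd (lambda_sum b) = odd (count_mem 0 b).
Proof.
elim: b => [|x b IHb] //=; rewrite oddD IHb oddM !oddX /= orbF orbT andbT oddD.
by case: (x == 0).
Qed.

Lemma odd_lambda_val m b (n : nat) : (0 < m)%N ->
  n%:Q = lambda_val m b -> odd n = odd (count_mem 0 b).
Proof.
move=> m_gt0 /lambda_val_natE /(congr1 odd).
rewrite oddD oddM oddX orbT andbT odd_lambda_sum -(prednK m_gt0) oddX /=.
by case: (odd n); case: (odd _).
Qed.

Lemma count_mem0_gt0 b : all (leq 1%N) b -> count_mem 0%N b = 0%N.
Proof. by move=> b_gt0; apply/count_memPn/negP => /(allP b_gt0). Qed.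

Lemma lambda_val_half m b (n : nat) : all (leq 1%N) b ->
  n%:Q = lambda_val m.+1 b -> (n %/ 2)%N%:Q = lambda_val m [seq x.-1 | x <- b].
Proof.
move=> b_gt0 hn.
have n_even : ~~ odd n.
  by rewrite (odd_lambda_val _ hn) // count_mem0_gt0.
apply: (@mulfI _ 2%:Q) => //; rewrite -lambda_val_map_succ -map_comp map_id_in; last first.
  by move=> x /(allP b_gt0) /= /prednK.
rewrite -hn -!pmulrn -natrM; congr _%:R.
by rewrite mulnC divnK // dvdn2.
Qed.

Lemma lambda_val_cons0 m b (n : nat) :
  n%:Q = lambda_val m (0 :: b) -> (3 * n + 1)%N%:Q = lambda_val m b.
Proof.
rewrite lambda_val_cons expr0 !natQ => hn.
by rewrite natrD natrM hn; field.
Qed.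

Definition shift_digits (b : seq nat) : seq nat := [seq x.-1 | x <- b & x != 0].

Lemma collatzT_lambda_val m b (n : nat) : sorted ltn b ->
  n%:Q = lambda_val m.+1 b -> (collatzT n)%:Q = lambda_val m (shift_digits b).
Proof.
move=> b_sorted hn; rewrite /collatzT /shift_digits.
have tail_gt0 x b' : sorted ltn (x :: b') -> all (leq 1%N) b'.
  move=> /(order_path_min ltn_trans); apply: sub_all => y; exact: leq_ltn_trans.
have filter_gt0 b' : all (leq 1%N) b' -> [seq x <- b' | x != 0] = b'.
  by move=> /allP b'_gt0; apply/all_filterP/allP => y /b'_gt0; case: y.
case: b b_sorted hn => [|[|x] b'] b_sorted hn.
- by rewrite (odd_lambda_val _ hn) //; apply: lambda_val_half.
- have b'_gt0 := tail_gt0 _ _ b_sorted.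
  rewrite (odd_lambda_val _ hn) //= count_mem0_gt0 // filter_gt0 //.
  exact/lambda_val_half/lambda_val_cons0.
- have b_gt0 : all (leq 1%N) (x.+1 :: b') by rewrite /= (tail_gt0 _ _ b_sorted).
  rewrite (odd_lambda_val _ hn) // count_mem0_gt0 // filter_gt0 //.
  exact: lambda_val_half.
Qed.

Lemma collatzT_gt0 n : (0 < n)%N -> (0 < collatzT n)%N.
Proof.
move=> n_gt0; rewrite /collatzT; case: ifP => [_ | /negbT]; rewrite divn_gt0 //.
  by lia.
by rewrite -dvdn2 => /dvdnP [k n_2k]; move: n_gt0; rewrite n_2k; lia.
Qed.

Lemma size_sorted_ltn_le K s :
  sorted ltn s -> all (fun x => x <= K)%N s -> (size s <= K.+1)%N.
Proof.
move=> s_sorted s_le; rewrite -(size_iota 0 K.+1); apply: uniq_leq_size.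
  exact: (sorted_uniq ltn_trans ltnn s_sorted).
by move=> x /(allP s_le); rewrite mem_iota.
Qed.

Lemma sorted_shift_digits b : sorted ltn b -> sorted ltn (shift_digits b).
Proof.
move=> /(sorted_filter ltn_trans (fun x => x != 0%N)).
apply: (homo_sorted_in (P := fun x => x != 0%N)); last exact: filter_all.
by move=> [|x] [|y].
Qed.

Lemma all_shift_digits_le K b :
  all (fun x => x <= K.+1)%N b -> all (fun x => x <= K)%N (shift_digits b).
Proof.
move=> /allP b_le; rewrite all_map; apply/allP => x.
by rewrite mem_filter /= => /andP [x_neq0 /b_le]; case: x x_neq0.
Qed.

Lemma shift_digits_zeros b : all (fun x => x == 0)%N b -> shift_digits b = [::].
Proof. by rewrite /shift_digits; elim: b => //= x b IHb /andP [/eqP -> /IHb]. Qed.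

Theorem mainTheorem1 :
  forall (m n : nat), inLambda m.+1 n -> inLambda m (collatzT n).
Proof.
move=> m n; rewrite /inLambda.
have pow2E (k : nat) : k%:Q = lambda_val m [::] -> k = (2 ^ m)%N.
  by rewrite lambda_val_nil natQ => /eqP; rewrite eqr_nat => /eqP.
case: (leqP m.+1 3) => [m_le2 -> | m_ge3 [n_gt0 [b [_ b_sorted b_le hn]]]].
  rewrite ltnW //; apply: pow2E; apply: (@collatzT_lambda_val _ [::]) => //.
  by rewrite lambda_val_nil natQ.
have Tn := collatzT_lambda_val b_sorted hn.
case: (leqP m 3) => [m_le3 | m_gt3].
  have m3 : m = 3%N by lia.
  apply/pow2E; rewrite Tn shift_digits_zeros //.
  by apply: sub_all b_le => x; rewrite m3 leqn0.
split; first exact: collatzT_gt0.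
have shift_le : all (fun x => x <= m - 4)%N (shift_digits b).
  by apply: all_shift_digits_le; rewrite -subSn.
exists (shift_digits b); split => //; last exact: sorted_shift_digits.
by have := size_sorted_ltn_le (sorted_shift_digits b_sorted) shift_le; lia.
Qed.
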